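(* Let $n\ge3$, $k\ge0$. If $S\subseteq\mathrm{Inc}(A,B)$ is a maximal independent set of $G_n^k$ which is not reversible, then $S$ contains a strict alternating cycle of size $3$.
   Context: For integers $n\ge3$, $k\ge0$, the crown $S_n^k$ is the poset with ground set $A\cup B$, $A=\{a_1,\dots,a_{n+k}\}$, $B=\{b_1,\dots,b_{n+k}\}$, indices cyclic modulo $n+k$; elements of $A$ are pairwise incomparable, as are elements of $B$, and $a_i$ is incomparable to $b_j$ when $j\in\{i,\dots,i+k\}$ (mod $n+k$), while $a_i<b_j$ otherwise. $\mathrm{Inc}(A,B)$ is the set of pairs $(a,b)\in A\times B$ with $a$ incomparable to $b$; $G_n^k$ has vertex set $\mathrm{Inc}(A,B)$ with $(a,b)$ adjacent to $(x,y)$ iff $a<y$ and $x<b$. A set $R\subseteq\mathrm{Inc}(A,B)$ is reversible if some linear extension $L$ of $S_n^k$ has $b<a$ in $L$ for all $(a,b)\in R$. An indexed set $\{(x_\alpha,y_\alpha):\alpha\in[m]\}\subseteq\mathrm{Inc}(A,B)$ is an alternating cycle of size $m$ if $x_\alpha\le y_{\alpha-1}$ for all $\alpha$ (indices cyclic mod $m$); it is strict if $x_\alpha\le y_\beta$ holds iff $\beta=\alpha-1$. *)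

From mathcomp Require Import all_boot.
Set Implicit Arguments. Unset Strict Implicit. Unset Printing Implicit Defensive.

(* The crown S_n^k.  Indices are taken in 'I_(n+k) (i.e. modulo n+k).
   Ground set: 'I_(n+k) + 'I_(n+k); [inl i] is a_i, [inr j] is b_j. *)
Definition crown_elt (n k : nat) : finType := ('I_(n+k) + 'I_(n+k))%type.

Definition aE n k (i : 'I_(n+k)) : crown_elt n k := inl i.
Definition bE n k (j : 'I_(n+k)) : crown_elt n k := inr j.

(* a_i is incomparable to b_j iff j \in {i, ..., i+k} (mod n+k),
   i.e. iff the cyclic offset (j - i) mod (n+k) is at most k. *)
Definition inc_idx (n k : nat) (i j : 'I_(n+k)) : bool :=
  ((j + (n + k) - i) %% (n + k) <= k)%N.

Definition crown_lt (n k : nat) (x y : crown_elt n k) : bool :=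
  match x, y with
  | inl i, inr j => ~~ inc_idx i j
  | _, _ => false
  end.

Definition crown_le (n k : nat) (x y : crown_elt n k) : bool :=
  (x == y) || crown_lt x y.

(* Inc(A,B): a pair (i,j) stands for (a_i, b_j). *)
Definition Inc (n k : nat) : {set 'I_(n+k) * 'I_(n+k)} :=
  [set p | inc_idx p.1 p.2].

Definition G_adj (n k : nat) (p q : 'I_(n+k) * 'I_(n+k)) : bool :=
  crown_lt (aE p.1) (bE q.2) && crown_lt (aE q.1) (bE p.2).

Definition independent (n k : nat) (S : {set 'I_(n+k) * 'I_(n+k)}) : Prop :=
  S \subset Inc n k /\ (forall p q, p \in S -> q \in S -> ~~ G_adj p q).

Definition maximal_independent (n k : nat) (S : {set 'I_(n+k) * 'I_(n+k)}) : Prop :=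
  independent S /\ (forall T, independent T -> S \subset T -> T = S).

Definition linear_extension (n k : nat) (L : rel (crown_elt n k)) : Prop :=
  reflexive L /\ antisymmetric L /\ transitive L /\ total L /\
  (forall x y, crown_le x y -> L x y).

Definition reversible (n k : nat) (R : {set 'I_(n+k) * 'I_(n+k)}) : Prop :=
  exists L : rel (crown_elt n k), linear_extension L /\
    (forall p, p \in R -> L (bE p.2) (aE p.1) && (bE p.2 != aE p.1)).

Definition alt_cycle (n k m : nat) (c : 'I_m -> 'I_(n+k) * 'I_(n+k)) : Prop :=
  (forall a, c a \in Inc n k) /\
  (forall a b : 'I_m, val b = ((val a + m).-1 %% m)%N ->
      crown_le (aE (c a).1) (bE (c b).2)).

Definition strict_alt_cycle (n k m : nat) (c : 'I_m -> 'I_(n+k) * 'I_(n+k)) : Prop :=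
  alt_cycle c /\
  (forall a b : 'I_m, crown_le (aE (c a).1) (bE (c b).2) <->
      val b = ((val a + m).-1 %% m)%N).

(* Suppose the maximal independent set S contains no strict alternating 3-cycle.  Then S is closed
   under composition: if (a,b), (a',b') are in S and a' < b, then (a,b') is in S, for otherwise
   maximality yields (a'',b'') in S with a < b'' and a'' < b', and the three pairs form a strict
   3-cycle.  Now orient a -> b when a < b and b -> a when (a,b) is in S.  By closure, every a
   reachable from b satisfies (a,b) in S, so a cycle, which must use some edge a -> b, would put an
   incomparable pair (a,b) with a < b into S.  Any topological order of this acyclic digraph is a
   linear extension of the crown reversing S. *)
From Stdlib Require Import Classical.
From mathcomp Require Import all_boot.

Arguments inc_idx : simpl never.

Section TopologicalIndex.
Variables (T : finType) (e : rel T).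
Hypothesis e_acyclic : forall x y, e x y -> ~~ connect e y x.

Definition height (x : T) : nat := #|[set z | connect e z x]|.

Lemma height_lt x y : e x y -> height x < height y.
Proof.
move=> exy; apply: proper_card; apply/properP; split.
  by apply/subsetP => z; rewrite !inE => /connect_trans; apply; apply: connect1.
by exists y; rewrite !inE ?connect0 ?e_acyclic.
Qed.

Definition topo_index (x : T) : nat := height x * #|T| + enum_rank x.

Lemma topo_index_modn x : topo_index x %% #|T| = enum_rank x.
Proof. by rewrite modnMDl modn_small. Qed.

Lemma topo_index_inj : injective topo_index.
Proof.
move=> x y eq_xy; apply/enum_rank_inj/val_inj.
by rewrite /= -!topo_index_modn eq_xy.
Qed.

Lemma topo_index_lt x y : e x y -> topo_index x < topo_index y.
Proof.
move=> /height_lt lt_xy; rewrite /topo_index.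
apply: (@leq_trans ((height x).+1 * #|T|)); first by rewrite mulSn addnC ltn_add2r.
by apply: leq_trans (leq_addr _ _); rewrite leq_mul2r lt_xy orbT.
Qed.

End TopologicalIndex.

Lemma acyclic_topological_index {T : finType} {e : rel T} :
  (forall x y, e x y -> ~~ connect e y x) ->
  exists f : T -> nat, injective f /\ forall x y, e x y -> f x < f y.
Proof.
move=> e_acyclic; exists (@topo_index T e).
by split; [apply: topo_index_inj | apply: topo_index_lt].
Qed.

Section Crown.
Variables (n k : nat).
Local Notation inc := (@inc_idx n k).
Local Notation elt := (crown_elt n k).
Local Notation index_pair := ('I_(n+k) * 'I_(n+k))%type.

Lemma crown_le_ab (i j : 'I_(n+k)) : crown_le (aE i) (bE j) = ~~ inc i j.
Proof. by []. Qed.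

Lemma G_adjE (p q : index_pair) : G_adj p q = ~~ inc p.1 q.2 && ~~ inc q.1 p.2.
Proof. by []. Qed.

Lemma G_adjC (p q : index_pair) : G_adj p q = G_adj q p.
Proof. by rewrite !G_adjE andbC. Qed.

Lemma linear_extension_index (f : elt -> nat) :
  injective f -> (forall x y, crown_lt x y -> f x < f y) ->
  linear_extension (fun x y => f x <= f y).
Proof.
move=> f_inj f_lt; split; first by move=> x /=.
split; first by move=> x y /anti_leq /f_inj.
split; first by move=> y x z; apply: leq_trans.
split; first by move=> x y; apply: leq_total.
by move=> x y /orP[/eqP-> | /f_lt /ltnW].
Qed.

Lemma cycle3_strict (p q s : index_pair) :
  inc p.1 p.2 -> inc q.1 q.2 -> inc s.1 s.2 ->
  inc p.1 q.2 -> inc q.1 s.2 -> inc s.1 p.2 ->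
  ~~ inc p.1 s.2 -> ~~ inc q.1 p.2 -> ~~ inc s.1 q.2 ->
  strict_alt_cycle (fun a : 'I_3 => nth p [:: p; q; s] a).
Proof.
move=> pp qq ss pq qs sp ps qp sq.
have cmpE (a b : 'I_3) :
    crown_le (aE (nth p [:: p; q; s] a).1) (bE (nth p [:: p; q; s] b).2) =
    (val b == ((val a + 3).-1 %% 3)%N).
  case: a b => [[|[|[|a]]] ?] // [[|[|[|b]]] ?] //=;
  by rewrite crown_le_ab ?pp ?qq ?ss ?pq ?qs ?sp ?(negbTE ps) ?(negbTE qp) ?(negbTE sq).
split; last by move=> a b; rewrite cmpE; split => /eqP.
split; last by move=> a b /eqP; rewrite -cmpE.
by case=> [[|[|[|a]]] ?] //; rewrite inE.
Qed.

Variable S : {set index_pair}.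

Definition composition_closed : Prop :=
  forall p q, p \in S -> q \in S -> ~~ inc q.1 p.2 -> (p.1, q.2) \in S.

Section MaximalIndependent.
Hypothesis S_max : maximal_independent S.

Lemma max_indep_inc {p} : p \in S -> inc p.1 p.2.
Proof. by case: S_max => [[/subsetP S_inc _] _] /S_inc; rewrite inE. Qed.

Lemma max_indep_nadj {p q} : p \in S -> q \in S -> ~~ G_adj p q.
Proof. by case: S_max => [[_ S_nadj] _]; apply: S_nadj. Qed.

Lemma max_indep_dominating t :
  t \in Inc n k -> t \notin S -> exists2 s, s \in S & G_adj t s.
Proof.
move=> tI tNS.
have [/existsP[s /andP[sS ts]] | no_adj] := boolP [exists s, (s \in S) && G_adj t s].
  by exists s.
have t_inc : inc t.1 t.2 by rewrite inE in tI.
have tS_indep : independent (t |: S).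
  case: S_max => [[S_inc S_nadj] _]; split; first by rewrite subUset sub1set tI.
  have t_nadj s : s \in S -> ~~ G_adj t s.
    by move=> sS; apply: contra no_adj => ts; apply/existsP; exists s; rewrite sS.
  move=> x y; rewrite !inE => /predU1P[-> | xS] /predU1P[-> | yS].
  - by rewrite G_adjE t_inc.
  - exact: t_nadj.
  - by rewrite G_adjC t_nadj.
  - exact: S_nadj.
case: S_max => [_ S_maximal]; have := S_maximal _ tS_indep (subsetUr _ _).
by move/setP/(_ t); rewrite setU11 (negbTE tNS).
Qed.

Lemma max_indep_composition_closed :
  ~ (exists c : 'I_3 -> index_pair, (forall a, c a \in S) /\ strict_alt_cycle c) ->
  composition_closed.
Proof.
move=> no_cycle p q pS qS qp; apply/negPn/negP => tNS; apply: no_cycle.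
have pq : inc p.1 q.2.
  by have := max_indep_nadj pS qS; rewrite G_adjE qp andbT negbK.
have [s sS] : exists2 s, s \in S & G_adj (p.1, q.2) s.
  by apply: max_indep_dominating; rewrite ?inE.
rewrite G_adjE /= => /andP[ps sq].
have qs : inc q.1 s.2 by have := max_indep_nadj qS sS; rewrite G_adjE sq andbT negbK.
have sp : inc s.1 p.2 by have := max_indep_nadj sS pS; rewrite G_adjE ps andbT negbK.
exists (fun a : 'I_3 => nth p [:: p; q; s] a); split.
  by case=> [[|[|[|a]]] ?].
by apply: cycle3_strict; rewrite ?max_indep_inc.
Qed.

End MaximalIndependent.

Section ComposableReversible.
Hypothesis S_inc : S \subset Inc n k.
Hypothesis S_closed : composition_closed.

Definition reversal_edge : rel elt := fun x y =>
  match x, y with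
  | inl i, inr j => ~~ inc i j
  | inr j, inl i => (i, j) \in S
  | _, _ => false
  end.

Definition reachable_from_b (j : 'I_(n+k)) : pred elt := fun z =>
  match z with
  | inl i => (i, j) \in S
  | inr j' => (j' == j) || [exists i, ((i, j) \in S) && ~~ inc i j']
  end.

Lemma reachable_from_b_closed {j x y} :
  reachable_from_b j x -> reversal_edge x y -> reachable_from_b j y.
Proof.
case: x => [i|j']; case: y => [i'|j''] //=.
  by move=> ijS ij''; apply/orP; right; apply/existsP; exists i; rewrite ijS.
case/orP => [/eqP-> // | /existsP[i /andP[ijS ij']] i'j'S].
exact: (S_closed (i', j') (i, j) i'j'S ijS ij').
Qed.

Lemma connect_reachable_from_b j z :
  connect reversal_edge (bE j) z -> reachable_from_b j z.
Proof.
case/connectP => pth + ->; have : reachable_from_b j (bE j) by rewrite /= eqxx.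
elim: pth (bE j) => [|y pth IH] x //= jx /andP[xy pth_path].
exact: IH y (reachable_from_b_closed jx xy) pth_path.
Qed.

Lemma no_reversal_path_down i j : ~~ inc i j -> ~~ connect reversal_edge (bE j) (aE i).
Proof.
move=> ij; apply/negP => /connect_reachable_from_b /= /(subsetP S_inc).
by rewrite inE (negbTE ij).
Qed.

Lemma reversal_edge_acyclic x y :
  reversal_edge x y -> ~~ connect reversal_edge y x.
Proof.
case: x => [i|j]; case: y => [i'|j'] //=; first exact: no_reversal_path_down.
move=> i'jS; apply/negP => /connectP[[|[i0|j0] pth] //=].
case/andP=> i'j0 pth_path pth_last.
have j0_to_i' : connect reversal_edge (bE j0) (aE i').
  apply: connect_trans (connect1 (i'jS : reversal_edge (bE j) (aE i'))).
  by apply/connectP; exists pth.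
by move: j0_to_i'; apply/negP/no_reversal_path_down.
Qed.

Lemma composition_closed_reversible : reversible S.
Proof.
have [f [f_inj f_lt]] := acyclic_topological_index reversal_edge_acyclic.
exists (fun x y => f x <= f y); split.
  apply: linear_extension_index => //.
  by move=> [i|j] [i'|j'] // ?; apply: f_lt.
by move=> [i j] ijS /=; rewrite andbT ltnW // f_lt.
Qed.

End ComposableReversible.

End Crown.

Theorem lemma4p5 (n k : nat) (hn : (3 <= n)%N) (S : {set 'I_(n+k) * 'I_(n+k)}) :
  maximal_independent S -> ~ reversible S ->
  exists c : 'I_3 -> 'I_(n+k) * 'I_(n+k),
    (forall a, c a \in S) /\ strict_alt_cycle c.
Proof.
move=> S_max S_nrev; apply: NNPP => no_cycle; apply: S_nrev.
apply: composition_closed_reversible; first by case: S_max => [[]].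
exact: max_indep_composition_closed.
Qed.
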